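(* Let $q$ be a prime power, $m\ge2$, and $\lambda$ a positive divisor of $q+1$ with $\lambda<q+1$; let $n=\frac{q^m+1}{\lambda}$. Then $\mathrm{ord}_n(q)=2m$. Moreover, for every $s\in\mathbb{Z}_n$, the $q$-cyclotomic coset of $s$ modulo $n$ is $C_s=\{y_{s,k},\,n-y_{s,k}:0\le k\le m-1\}$, where $y_{s,k}=sq^k\bmod n$.
   Context: For $0\le s\le n-1$, the $q$-cyclotomic coset of $s$ modulo $n$ is $C_s=\{sq^i\bmod n:0\le i\le \mathrm{ord}_n(q)-1\}$. *)

From mathcomp Require Import all_boot.
Set Implicit Arguments. Unset Strict Implicit. Unset Printing Implicit Defensive.

(* Multiplicative order of q modulo n: the least k >= 1 with q^k = 1 (mod n).
   When gcd(q,n) = 1 such k exists and k <= totient n <= n, so searching in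
   1..n finds it; if no such k exists we return 0 (never used here). *)
Definition ordn (n q : nat) : nat :=
  nth 0 [seq k <- iota 1 n | q ^ k == 1 %[mod n]] 0.

Definition cyc_coset (n q s : nat) : seq nat :=
  [seq (s * q ^ i) %% n | i <- iota 0 (ordn n q)].

Definition prime_power (q : nat) : Prop :=
  exists p e, prime p /\ 0 < e /\ q = p ^ e.

(* Since n divides q^m + 1, multiplication by q^m acts as negation modulo n:
   s q^(m+k) = -s q^k (mod n).  Hence q^(2m) = 1 and the coset of s consists of
   the residues s q^k and their negatives for k < m.  The order is exactly 2m
   because lam < q forces n > q^(m-1) + 1: then 1 < q^j < n - 1 for 0 < j < m,
   so neither q^j nor q^(m+j) = n - q^j is 1 modulo n. *)

From mathcomp Require Import all_boot.
From mathcomp Require Import zify.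

Lemma ordn_eq (n q k : nat) : 0 < k <= n -> q ^ k = 1 %[mod n] ->
  (forall j, 0 < j < k -> q ^ j != 1 %[mod n]) -> ordn n q = k.
Proof.
move=> /andP[k_gt0 k_le_n] qk_1 qj_n1; rewrite /ordn.
have -> : iota 1 n = iota 1 k.-1 ++ iota (1 + k.-1) (n - k).+1.
  by rewrite -iotaD; congr iota; lia.
rewrite add1n prednK // filter_cat (@eq_in_filter _ _ pred0) ?filter_pred0 /= ?qk_1 ?eqxx //.
move=> j; rewrite mem_iota => j_range; apply/negbTE/qj_n1; lia.
Qed.

Lemma modn_opp (n a b : nat) : n %| a + b -> a %% n = (n - b %% n) %% n.
Proof.
case: n => [|n]; first by rewrite dvd0n addn_eq0 => /andP[/eqP->].
move=> n_dvd; apply/eqP.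
by rewrite -(eqn_modDr (b %% n.+1)) subnK ?modnDmr ?modnn // ltnW ?ltn_mod.
Qed.

Lemma double_leq_expn b k : 1 < b -> 2 * k <= b ^ k.
Proof. by case: k => // k b_gt1; rewrite expnS leq_mul // ltn_expl. Qed.

Lemma prime_power_gt1 q : prime_power q -> 1 < q.
Proof.
move=> [p [e [p_prime [e_gt0 ->]]]].
by apply: leq_trans (prime_gt1 p_prime) _; rewrite -{1}(expn1 p) leq_exp2l ?prime_gt1.
Qed.

Lemma expn_pred_ltn_div q m d : 1 < q -> 1 < m -> d < q -> d %| q ^ m + 1 ->
  q ^ m.-1 + 1 < (q ^ m + 1) %/ d.
Proof.
move=> q_gt1 m_gt1 d_lt_q d_dvd; rewrite ltn_divRL //.
have qm : q ^ m = q * q ^ m.-1 by rewrite -expnS prednK // ltnW.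
have q_le : q <= q ^ m.-1 by rewrite -{1}(expn1 q) leq_exp2l //; lia.
have : (q ^ m.-1 + 1) * d <= (q ^ m.-1 + 1) * q.-1 by rewrite leq_mul2l; lia.
rewrite qm; nia.
Qed.

Section Antiperiodic.

Variables n q m : nat.
Hypothesis n_dvd : n %| q ^ m + 1.

Lemma mul_expnD_modn s k : (s * q ^ (m + k)) %% n = (n - (s * q ^ k) %% n) %% n.
Proof.
apply: modn_opp.
have -> : s * q ^ (m + k) + s * q ^ k = s * q ^ k * (q ^ m + 1).
  by rewrite expnD mulnDr muln1 -mulnA [q ^ m * _]mulnC.
exact: dvdn_mull.
Qed.

Lemma cyc_coset_antiperiodic s : ordn n q = 2 * m ->
  cyc_coset n q s =i [seq (s * q ^ k) %% n | k <- iota 0 m] ++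
                     [seq (n - (s * q ^ k) %% n) %% n | k <- iota 0 m].
Proof.
move=> ord_q x; rewrite /cyc_coset ord_q mem_cat; apply/mapP/orP.
- case=> i; rewrite mem_iota add0n => /andP[_ i_lt] ->.
  have [i_lt_m | m_le_i] := ltnP i m.
    by left; apply/mapP; exists i; rewrite ?mem_iota.
  right; apply/mapP; exists (i - m); first by rewrite mem_iota; lia.
  by rewrite -mul_expnD_modn subnKC.
- case=> /mapP[k]; rewrite mem_iota add0n => /andP[_ k_lt] ->.
    by exists k; rewrite ?mem_iota //; lia.
  by exists (m + k); rewrite ?mul_expnD_modn // mem_iota; lia.
Qed.

Hypothesis q_gt1 : 1 < q.
Hypothesis m_gt0 : 0 < m.
Hypothesis n_gt : q ^ m.-1 + 1 < n.

Lemma leq_expn_pred j : j < m -> q ^ j <= q ^ m.-1.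
Proof. by move=> j_lt; rewrite leq_exp2l //; lia. Qed.

Lemma expn_modn_small j : j < m -> q ^ j %% n = q ^ j.
Proof. by move=> /leq_expn_pred j_le; rewrite modn_small //; lia. Qed.

Lemma expnD_modn_small j : j < m -> q ^ (m + j) %% n = n - q ^ j.
Proof.
move=> j_lt; have := mul_expnD_modn 1 j; rewrite !mul1n (expn_modn_small _ j_lt) => ->.
have qj_gt0 : 0 < q ^ j by rewrite expn_gt0 ltnW.
by rewrite modn_small //; lia.
Qed.

Lemma expn_modn_neq1 j : 0 < j < 2 * m -> q ^ j %% n != 1.
Proof.
move=> /andP[j_gt0 j_lt]; have [j_lt_m | m_le_j] := ltnP j m.
  have := leq_pexp2l (ltnW q_gt1) j_gt0; rewrite expn_modn_small // expn1; lia.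
rewrite -(subnKC m_le_j) expnD_modn_small; last by lia.
have := leq_expn_pred (j - m); lia.
Qed.

Lemma expn_double_modn : q ^ (2 * m) = 1 %[mod n].
Proof.
have qm : q ^ m %% n = n - 1 by rewrite -[m in q ^ m]addn0 expnD_modn_small.
have := mul_expnD_modn 1 m; rewrite !mul1n mul2n -addnn => ->.
by rewrite qm subKn //; lia.
Qed.

Lemma ordn_antiperiodic : ordn n q = 2 * m.
Proof.
apply: ordn_eq; last by move=> j /expn_modn_neq1; rewrite [1 %% n]modn_small //; lia.
- by have := double_leq_expn q m.-1 q_gt1; lia.
- exact: expn_double_modn.
Qed.

End Antiperiodic.

Theorem lemma5 (q m lam : nat) :
  prime_power q -> 2 <= m ->
  0 < lam -> lam %| q + 1 -> lam < q + 1 ->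
  lam %| q ^ m + 1 ->
  let n := (q ^ m + 1) %/ lam in
  ordn n q = 2 * m /\
  (forall s, s < n ->
     let y := fun k => (s * q ^ k) %% n in
     cyc_coset n q s =i
       [seq y k | k <- iota 0 m] ++ [seq (n - y k) %% n | k <- iota 0 m]).
Proof.
move=> /prime_power_gt1 q_gt1 m_gt1 _ lam_dvd_q1 lam_le lam_dvd n.
have lam_lt_q : lam < q.
  rewrite ltn_neqAle -ltnS -[q.+1]addn1 lam_le andbT.
  by apply: contraTneq lam_dvd_q1 => ->; rewrite dvdn_addr // dvdn1; lia.
have n_dvd : n %| q ^ m + 1 by apply: dvdn_div.
have n_gt : q ^ m.-1 + 1 < n by exact: expn_pred_ltn_div.
have ord_q : ordn n q = 2 * m by apply: ordn_antiperiodic => //; exact: ltnW.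
by split=> // s _; apply: cyc_coset_antiperiodic.
Qed.
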